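(* Let $n\ge6$ and $m\ge2$. The unique set family of shape $(m^n)$ and type $(m+n-4,\ m+2,\ m+2,\ (m-1)^{n-6},\ (m-2)^3)$ is $\{1,2,\dots,m-2,m+1,m+2\}^{\preceq}\cup\{1,2,\dots,m-2,m-1,m+n-4\}^{\preceq}$. This type is not of the form $(m^n)\star\nu$ for any partition $\nu$ of $n-1$ with at most $m$ parts.
   Context: Majorization: for $m$-subsets $X=\{x_1<\dots<x_m\}$, $Y=\{y_1<\dots<y_m\}$ of $\mathbf{N}$, $X\preceq Y$ if $x_i\le y_i$ for all $i$. For an $m$-subset $A$, the downset $A^{\preceq}$ is the set of all $m$-subsets $X$ of $\mathbf{N}$ with $X\preceq A$. A set family of shape $(m^n)$ is a collection of $n$ distinct $m$-subsets of $\mathbf{N}$; it has type $\lambda$ (largest part $a$, conjugate $\lambda'$) if for each $i\in\{1,\dots,a\}$ exactly $\lambda'_i$ of its sets contain $i$. In the partition above, exponents denote repeated parts, and parts equal to $0$ (when $m=2$) are omitted. For a partition $\nu$ of $n-1$ with $k\le m$ parts, $(m^n)\star\nu$ is the partition obtained from the Young diagram of $(m^n)$ by, for each $1\le i\le k$, deleting $\nu_i$ boxes (from the bottom) of column $m+1-i$ and adding $\nu_i$ boxes to row $i$. *)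

From mathcomp Require Import all_boot.
From mathcomp Require Import finmap.
Set Implicit Arguments. Unset Strict Implicit. Unset Printing Implicit Defensive.
Local Open Scope fset_scope.

(* N = {1,2,3,...}; a subset X of N is a finite set of nats not containing 0. *)

Definition msubset (m : nat) (X : {fset nat}) : Prop :=
  #|` X| = m /\ 0 \notin X.

Definition majorized (X Y : {fset nat}) : bool :=
  all2 leq (sort leq X) (sort leq Y).

Definition in_downset (m : nat) (A X : {fset nat}) : Prop :=
  msubset m X /\ majorized X A.

Definition shape_family (m n : nat) (F : {fset {fset nat}}) : Prop :=
  #|` F| = n /\ (forall X, X \in F -> msubset m X).

Local Close Scope fset_scope.

(* partitions as (weakly decreasing) lists of parts *)
Definition largest_part (lam : seq nat) : nat := foldr maxn 0 lam.
Definition conj_part (lam : seq nat) (i : nat) : nat := count (fun p => i <= p) lam.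

Definition has_type (lam : seq nat) (F : {fset {fset nat}}) : Prop :=
  forall i, 1 <= i <= largest_part lam ->
    count (fun X : {fset nat} => i \in X) (enum_fset F) = conj_part lam i.

Definition is_partition_of (N : nat) (nu : seq nat) : bool :=
  sorted geq nu && all (fun p => 0 < p) nu && (sumn nu == N).

(* (m^n) * nu : row lengths (rows 1..n) of the diagram obtained from the
   n x m rectangle by deleting nu_i boxes from the bottom of column m+1-i and
   adding nu_i boxes to row i (1 <= i <= k = size nu).  Column m+1-i (i.e.
   0-based part index i-1) keeps height n - nu_i; row j (1-based) then has
   #{ i in 1..m | n - nu_i >= j } remaining boxes, plus nu_j added boxes. *)
Definition star (m n : nat) (nu : seq nat) : seq nat :=
  mkseq (fun j => count (fun i => j.+1 + nth 0 nu i <= n) (iota 0 m) + nth 0 nu j) n.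

Definition same_partition (l1 l2 : seq nat) : bool :=
  filter (fun p => 0 < p) l1 == filter (fun p => 0 < p) l2.

Definition lam56 (m n : nat) : seq nat :=
  [:: m + n - 4; m + 2; m + 2] ++ nseq (n - 6) (m - 1) ++ nseq 3 (m - 2).

Local Open Scope fset_scope.
Definition A56 (m : nat) : {fset nat} := seq_fset tt (iota 1 (m - 2) ++ [:: m + 1; m + 2])%N.
Definition B56 (m n : nat) : {fset nat} := seq_fset tt (iota 1 (m - 1) ++ [:: m + n - 4])%N.

From mathcomp Require Import all_boot finmap zify.
From Stdlib Require Import ZifyBool. (* lets lia reason about [nat_of_bool] *)

(* Write a = m + n - 4 for the largest part of the type.  The columns 1, ..., m - 2 of
   the type have height n, so every set of a family of this type contains
   {1, ..., m - 2}; the parts sum to n m, which is the total number of elements, so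
   no set reaches beyond a.  Hence every set is {1, ..., m - 2, x, y} with
   m - 1 <= x < y <= a.  The n - 3 sets through m - 1 have pairwise distinct tops y
   in the (n - 3)-element range [m, a], so they use up every value there; since a
   value >= m + 3 lies in a single set, a set avoiding m - 1 has y <= m + 2.  These
   are exactly the members of the two downsets, and there are n of them.
   For the second claim, the first rows of (m^n) * nu are m + nu_1, m + nu_2,
   m + nu_3 once the nu_i are small, which forces nu_1 = n - 4 and nu_2 = nu_3 = 2,
   too much for a partition of n - 1, whatever its number of parts. *)

Lemma sum_nat_of_bool (T : Type) (r : seq T) (a : pred T) :
  \sum_(i <- r) (a i : nat) = count a r.
Proof. by rewrite -sum1_count [RHS]big_mkcond. Qed.

Lemma sum_count_swap {T U : Type} (r : seq T) (s : seq U) (P : T -> U -> bool) :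
  \sum_(i <- r) count (P i) s = \sum_(x <- s) count (P^~ x) r.
Proof.
elim: s => [|x s IHs] /=; first by rewrite big_nil big1.
by rewrite big_cons big_split /= IHs sum_nat_of_bool.
Qed.

Lemma count_mem_swap (T : eqType) (s t : seq T) :
  uniq s -> uniq t -> count (fun x => x \in s) t = count (fun x => x \in t) s.
Proof.
move=> s_uniq t_uniq; rewrite -!size_filter; apply/perm_size/uniq_perm.
- exact: filter_uniq.
- exact: filter_uniq.
- by move=> z; rewrite !mem_filter andbC.
Qed.

Lemma eq_in_leq_sum {T : eqType} {s : seq T} {f g : T -> nat} :
  {in s, forall x, f x <= g x} -> \sum_(x <- s) g x <= \sum_(x <- s) f x ->
  {in s, f =1 g}.
Proof.
elim: s => [|y s IHs] // le_fg; rewrite !big_cons => le_sum x.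
have le_fg_s : {in s, forall x, f x <= g x}.
  by move=> z zs; apply: le_fg; rewrite inE zs orbT.
have le_sum_s : \sum_(x <- s) f x <= \sum_(x <- s) g x.
  by rewrite !(big_seq_cond (fun _ => true)); apply: leq_sum => z /andP[/le_fg_s].
have le_fg_y := le_fg y (mem_head y s).
rewrite inE => /predU1P[->|xs]; first lia.
by apply: IHs => //; lia.
Qed.

Lemma count_le1_uniq {T : eqType} {a : pred T} {s : seq T} (x : T) :
  uniq s -> {in s, forall y, a y -> y = x} -> count a s <= 1.
Proof.
move=> s_uniq a_x; apply: leq_trans (leq_b1 (x \in s)); rewrite -count_uniq_mem //.
rewrite (eq_in_count (a2 := predI a (pred1 x))) => [|y ys /=].
  by apply: sub_count => y /andP[].
by case ay: (a y); rewrite //= (a_x y) ?eqxx.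
Qed.

Lemma count_le1_eq {T : eqType} {a : pred T} {s : seq T} {x y : T} :
  count a s <= 1 -> x \in s -> y \in s -> a x -> a y -> x = y.
Proof.
rewrite -size_filter => le1 xs ys ax ay.
have: x \in filter a s by rewrite mem_filter ax.
have: y \in filter a s by rewrite mem_filter ay.
by case: (filter a s) le1 => [|z [|]] //= _; rewrite !inE => /eqP-> /eqP->.
Qed.

Lemma count_leq_iota1 p k : p <= k -> count (fun i => i <= p) (iota 1 k) = p.
Proof.
case: p => [_|p lt_pk].
  by rewrite (eq_in_count (a2 := pred0)) ?count_pred0 // => i; rewrite mem_iota; case: i.
by rewrite -size_filter (@eq_filter _ _ (fun i => i <= 1 + p)) // filter_iota_leq // size_iota.
Qed.

Lemma count_iota_orb (b : bool) i a k :
  count (fun w => b || (w == i)) (iota a k) = if b then k else a <= i < a + k.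
Proof.
case: b; first by rewrite count_predT size_iota.
by rewrite count_uniq_mem ?iota_uniq ?mem_iota.
Qed.

Lemma mem_map_pair (T U : eqType) (a : T) (s : seq U) x y :
  ((x, y) \in [seq (a, w) | w <- s]) = (x == a) && (y \in s).
Proof.
by apply/mapP/andP => [[w ws [-> ->]] | [/eqP-> ys]]; [split | exists y].
Qed.

Lemma sorted_ltn_iota_cat c k t :
  sorted ltn t -> all (leq (c + k)) t -> sorted ltn (iota c k ++ t).
Proof.
move=> t_lt /allP t_ge.
rewrite (sorted_pairwise ltn_trans) pairwise_cat -!(sorted_pairwise ltn_trans).
rewrite iota_ltn_sorted t_lt !andbT.
by apply/allrelP => i z; rewrite mem_iota => /andP[_ lt_ick] /t_ge; lia.
Qed.

Lemma take_sorted_iota_sub {c k s} :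
  sorted ltn s -> all (leq c) s -> {subset iota c k <= s} ->
  take k s = iota c k /\ all (leq (c + k)) (drop k s).
Proof.
elim: k c s => [|k IHk] c s; first by rewrite addn0 take0 drop0.
case: s => [_ _ /(_ c)|a s]; first by rewrite mem_iota in_nil; lia.
rewrite /= (path_sortedE ltn_trans) => /andP[/allP a_lt s_lt] /andP[le_ca s_ge] sub.
have a_c : a = c.
  have /predU1P[//|cs] : c \in a :: s by apply/sub/mem_head.
  by have := a_lt c cs; lia.
have s_gt : all (leq c.+1) s by apply/allP => z /a_lt; rewrite a_c.
have sub_s : {subset iota c.+1 k <= s}.
  move=> z z_iota; have /predU1P[z_a|//] : z \in a :: s.
    by apply: sub; rewrite /= inE z_iota orbT.
  by move: z_iota; rewrite mem_iota z_a a_c ltnn.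
by have [-> ?] := IHk _ _ s_lt s_gt sub_s; rewrite a_c -addSnnS.
Qed.

Lemma take_sorted_iota_all2 {c k s t} :
  sorted ltn s -> all (leq c) s -> all2 leq s (iota c k ++ t) ->
  [/\ take k s = iota c k, all (leq (c + k)) (drop k s) & all2 leq (drop k s) t].
Proof.
elim: k c s => [|k IHk] c s; first by rewrite addn0 take0 drop0.
case: s => [//|a s].
rewrite /= (path_sortedE ltn_trans) => /andP[/allP a_lt s_lt] /andP[le_ca s_ge] /andP[le_ac le_st].
have a_c : a = c by apply/eqP; rewrite eqn_leq le_ac le_ca.
have s_gt : all (leq c.+1) s by apply/allP => z /a_lt; rewrite a_c.
by have [-> ? ?] := IHk _ _ s_lt s_gt le_st; rewrite a_c -addSnnS.
Qed.

Lemma sort_seq_fset (s : seq nat) : sorted ltn s -> sort leq (seq_fset tt s) = s.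
Proof.
move=> s_lt; rewrite -[RHS](sorted_sort leq_trans (sub_sorted ltnW s_lt)).
apply/(perm_sortP leq_total leq_trans anti_leq).
by rewrite -{2}(undup_id (sorted_uniq ltn_trans ltnn s_lt)) seq_fset_perm.
Qed.

Lemma sort_msubset {m X} : msubset m X ->
  [/\ sorted ltn (sort leq X), all (leq 1) (sort leq X) & size (sort leq X) = m].
Proof.
case=> card_X X0; split; last by rewrite size_sort.
- by rewrite ltn_sorted_uniq_leq sort_uniq fset_uniq (sort_sorted leq_total).
- by apply/allP => -[|z] //; rewrite mem_sort => X_0; rewrite X_0 in X0.
Qed.

Definition pairset (m x y : nat) : {fset nat} := seq_fset tt (iota 1 (m - 2) ++ [:: x; y]).

Section Pairset.

Context {m : nat}.
Hypothesis hm : 2 <= m.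

Lemma sorted_pairseq x y : m - 1 <= x < y -> sorted ltn (iota 1 (m - 2) ++ [:: x; y]).
Proof. by move=> xy; apply: sorted_ltn_iota_cat => /=; lia. Qed.

Lemma sort_pairset x y :
  m - 1 <= x < y -> sort leq (pairset m x y) = iota 1 (m - 2) ++ [:: x; y].
Proof. by move=> /sorted_pairseq; apply: sort_seq_fset. Qed.

Lemma mem_pairset x y z : (z \in pairset m x y) = [|| 0 < z <= m - 2, z == x | z == y].
Proof. by rewrite seq_fsetE mem_cat mem_iota !inE; congr orb; lia. Qed.

Lemma msubset_pairset x y : m - 1 <= x < y -> msubset m (pairset m x y).
Proof.
move=> xy; split; last by rewrite mem_pairset; lia.
by rewrite -(size_sort leq) sort_pairset // size_cat size_iota /=; lia.
Qed.

Lemma pairset_inj x y x' y' : m - 1 <= x < y -> m - 1 <= x' < y' ->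
  pairset m x y = pairset m x' y' -> (x, y) = (x', y').
Proof.
move=> xy xy' e; have mem z := congr1 (fun X => z \in X) e.
move: (mem x) (mem y) (mem x') (mem y'); rewrite /= !mem_pairset !eqxx !orbT => ? ? ? ?.
by have [-> ->] : x = x' /\ y = y' by lia.
Qed.

Lemma pairset_of_sorted {X} : msubset m X ->
  take (m - 2) (sort leq X) = iota 1 (m - 2) ->
  all (leq (1 + (m - 2))) (drop (m - 2) (sort leq X)) ->
  exists x y, [/\ m - 1 <= x < y, drop (m - 2) (sort leq X) = [:: x; y] & X = pairset m x y].
Proof.
move=> X_m take_X drop_ge; have [X_lt _ size_X] := sort_msubset X_m.
have: size (drop (m - 2) (sort leq X)) = 2 by rewrite size_drop size_X; lia.
have drop_lt := drop_sorted (m - 2) X_lt.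
case: (drop _ _) drop_ge drop_lt (cat_take_drop (m - 2) (sort leq X)) => [|x [|y []]] //=.
rewrite take_X !andbT => /andP[le_x le_y] lt_xy e_X _; exists x, y; split => //; first lia.
by apply/fsetP => z; rewrite -(mem_sort leq) -e_X seq_fsetE.
Qed.

Lemma in_downset_pairset u v X : m - 1 <= u < v ->
  in_downset m (pairset m u v) X <->
  exists x y, [/\ m - 1 <= x < y, x <= u, y <= v & X = pairset m x y].
Proof.
move=> uv; split.
- case=> X_m; rewrite /majorized sort_pairset // => maj.
  have [X_lt X_pos _] := sort_msubset X_m.
  have [take_X drop_ge drop_le] := take_sorted_iota_all2 X_lt X_pos maj.
  have [x [y [xy e_drop ->]]] := pairset_of_sorted X_m take_X drop_ge.
  by move: drop_le; rewrite e_drop /= => /and3P[le_xu le_yv _]; exists x, y.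
- case=> x [y [xy le_xu le_yv ->]]; split; first exact: msubset_pairset.
  rewrite /majorized !sort_pairset //.
  by elim: (iota 1 (m - 2)) => [|i s] /=; [rewrite le_xu le_yv | rewrite leqnn].
Qed.

End Pairset.

Lemma largest_part_cons (a : nat) (s : seq nat) :
  all (fun p => p <= a) s -> largest_part (a :: s) = a.
Proof.
move=> s_le; apply/maxn_idPl.
by elim: s s_le => //= p s IHs /andP[le_pa /IHs]; rewrite geq_max le_pa.
Qed.

Lemma conj_part_lam56 m n i : conj_part (lam56 m n) i =
  (i <= m + n - 4) + (i <= m + 2) * 2 + (i <= m - 1) * (n - 6) + (i <= m - 2) * 3.
Proof. by rewrite /conj_part /lam56 !count_cat !count_nseq /=; lia. Qed.

(* [x, y] lies below [m + 1, m + 2] (the top of A56) or below [m - 1, m + n - 4]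
   (the top of B56). *)
Definition admissible56 (m n x y : nat) : bool :=
  (m - 1 <= x < y) && ((x <= m + 1) && (y <= m + 2) || (x <= m - 1) && (y <= m + n - 4)).

Definition pairs56 (m n : nat) : seq (nat * nat) :=
  [seq (m - 1, w) | w <- iota m (n - 3)] ++ [:: (m, m + 1); (m, m + 2); (m + 1, m + 2)].

Definition family56 (m n : nat) : {fset {fset nat}} :=
  seq_fset tt [seq pairset m p.1 p.2 | p <- pairs56 m n].

Section Family56.

Context {m n : nat}.
Hypotheses (hm : 2 <= m) (hn : 6 <= n).

Lemma lam56_le : all (fun p => p <= m + n - 4) (lam56 m n).
Proof. by rewrite /lam56 /= all_cat !all_nseq /=; lia. Qed.

Lemma largest_part_lam56 : largest_part (lam56 m n) = m + n - 4.
Proof. by apply: largest_part_cons; have /andP[] := lam56_le. Qed.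

Lemma sumn_lam56 : sumn (lam56 m n) = n * m.
Proof.
rewrite /lam56 !sumn_cat !sumn_nseq /=.
have [k ->] : exists k, m = k + 2 by exists (m - 2); lia.
have [l ->] : exists l, n = l + 6 by exists (n - 6); lia.
nia.
Qed.

Lemma mem_pairs56 (x y : nat) : ((x, y) \in pairs56 m n) = admissible56 m n x y.
Proof. by rewrite mem_cat mem_map_pair mem_iota !inE !xpair_eqE /admissible56; lia. Qed.

Lemma size_pairs56 : size (pairs56 m n) = n.
Proof. by rewrite size_cat size_map size_iota /=; lia. Qed.

Lemma uniq_pairs56 : uniq (pairs56 m n).
Proof.
rewrite cat_uniq map_inj_uniq ?iota_uniq => [|u v [//]].
by rewrite /= !inE !xpair_eqE !mem_map_pair; lia.
Qed.

Lemma enum_family56 :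
  perm_eq (enum_fset (family56 m n)) [seq pairset m p.1 p.2 | p <- pairs56 m n].
Proof.
rewrite -[X in perm_eq _ X]undup_id ?seq_fset_perm // map_inj_in_uniq ?uniq_pairs56 //.
move=> [x y] [x' y']; rewrite !mem_pairs56 => /andP[xy _] /andP[xy' _].
exact: pairset_inj.
Qed.

Lemma card_family56 : #|` family56 m n|%fset = n.
Proof. by rewrite (perm_size enum_family56) size_map size_pairs56. Qed.

Lemma in_family56 X :
  X \in family56 m n <-> exists x y, admissible56 m n x y /\ X = pairset m x y.
Proof.
rewrite -[X \in _]/(X \in enum_fset (family56 m n)) (perm_mem enum_family56); split.
  by case/mapP => -[x y]; rewrite mem_pairs56 => adm ->; exists x, y.
by case=> x [y [adm ->]]; apply/mapP; exists (x, y); rewrite ?mem_pairs56.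
Qed.

Lemma shape_family56 : shape_family m n (family56 m n).
Proof.
split; first exact: card_family56.
by move=> X /in_family56[x [y [/andP[xy _] ->]]]; apply: msubset_pairset.
Qed.

Lemma type_family56 : has_type (lam56 m n) (family56 m n).
Proof.
move=> i; rewrite largest_part_lam56 conj_part_lam56 (permP enum_family56) count_map => i_range.
have [i_base | i_top] := leqP i (m - 2).
  rewrite (eq_count (a2 := predT)) ?count_predT ?size_pairs56 => [|p]; first lia.
  by rewrite /= mem_pairset; lia.
rewrite count_cat count_map /= !mem_pairset.
rewrite (eq_count (a2 := fun w => (i == m - 1) || (w == i))) => [|w]; last first.
  by rewrite /= mem_pairset; lia.
by rewrite count_iota_orb; case: ifP; lia.
Qed.

Lemma B56_pairset : B56 m n = pairset m (m - 1) (m + n - 4).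
Proof.
rewrite /B56 /pairset (_ : m - 1 = (m - 2) + 1); last lia.
by rewrite iotaD -catA /= add1n addn1.
Qed.

Lemma downsets_family56 X :
  X \in family56 m n <-> in_downset m (A56 m) X \/ in_downset m (B56 m n) X.
Proof.
rewrite B56_pairset in_family56 !in_downset_pairset //; try lia.
split.
  by case=> x [y [/andP[xy /orP[] /andP[le_x le_y]] ->]]; [left | right]; exists x, y.
by case=> -[x [y [xy le_x le_y ->]]]; exists x, y; split => //; rewrite /admissible56 xy /=; lia.
Qed.

End Family56.

Section Uniqueness.

Context {m n : nat} {G : {fset {fset nat}}}.
Hypotheses (hm : 2 <= m) (hn : 6 <= n).
Hypotheses (shapeG : shape_family m n G) (typeG : has_type (lam56 m n) G).

Let card_G : #|` G|%fset = n := shapeG.1.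
Let msubset_G X : X \in G -> msubset m X := shapeG.2 X.

Let count_G i : 0 < i <= m + n - 4 ->
  count (fun X => i \in X) (enum_fset G) = conj_part (lam56 m n) i.
Proof. by rewrite -(largest_part_lam56 hm hn); apply: typeG. Qed.

Lemma base_sub_G (X : {fset nat}) (i : nat) : X \in G -> 0 < i <= m - 2 -> i \in X.
Proof.
move=> XG i_base; have all_i : all (fun Y : {fset nat} => i \in Y) (enum_fset G).
  by rewrite all_count count_G ?conj_part_lam56 ?card_G; lia.
exact: (allP all_i X XG).
Qed.

Lemma bounded_G (X : {fset nat}) (z : nat) : X \in G -> z \in X -> z <= m + n - 4.
Proof.
pose R := iota 1 (m + n - 4).
have sum_R : \sum_(Y <- enum_fset G) count (fun i => i \in R) Y = n * m.
  rewrite (eq_big_seq (fun Y : {fset nat} => count (fun i => i \in Y) R)) => [|Y _].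
    rewrite -(sum_count_swap R _ (fun i (Y : {fset nat}) => i \in Y)).
    rewrite (eq_big_seq (conj_part (lam56 m n))) => [|i]; last first.
      by rewrite mem_iota => ?; apply: count_G; lia.
    rewrite /conj_part sum_count_swap (eq_big_seq id) => [|p /(allP (lam56_le hm hn))].
      by rewrite -sumnE sumn_lam56.
    exact: count_leq_iota1.
  by rewrite count_mem_swap ?iota_uniq ?fset_uniq.
have R_le_m : {in enum_fset G, forall Y : {fset nat}, count (fun i => i \in R) Y <= m}.
  by move=> Y /msubset_G[<- _]; apply: count_size.
have sum_m : \sum_(Y <- enum_fset G) m <= \sum_(Y <- enum_fset G) count (fun i => i \in R) Y.
  by rewrite sum_R big_const_seq count_predT iter_addn_0 card_G mulnC.
move=> XG; have /allP X_R : all (fun i => i \in R) X.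
  by rewrite all_count (eq_in_leq_sum R_le_m sum_m X XG) (msubset_G X XG).1.
by move=> /X_R; rewrite mem_iota; lia.
Qed.

Lemma pairset_G {X} : X \in G ->
  exists x y, [/\ m - 1 <= x < y, y <= m + n - 4 & X = pairset m x y].
Proof.
move=> XG; have X_m := msubset_G X XG; have [X_lt X_pos _] := sort_msubset X_m.
have base_X : {subset iota 1 (m - 2) <= sort leq X}.
  by move=> i; rewrite mem_iota mem_sort => i_base; apply: base_sub_G XG _; lia.
have [take_X drop_ge] := take_sorted_iota_sub X_lt X_pos base_X.
have [x [y [xy _ eX]]] := pairset_of_sorted hm X_m take_X drop_ge.
by exists x, y; split => //; apply: bounded_G XG _; rewrite eX mem_pairset eqxx !orbT.
Qed.

Lemma cover_m1_G v : m <= v <= m + n - 4 ->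
  count (fun Y => (m - 1 \in Y) && (v \in Y)) (enum_fset G) = 1.
Proof.
pose P (w : nat) (Y : {fset nat}) := (m - 1 \in Y) && (w \in Y).
pose R := iota m (n - 3).
have P_le1 : {in R, forall v, count (P v) (enum_fset G) <= 1}.
  move=> w; rewrite mem_iota => w_range.
  apply: (count_le1_uniq (pairset m (m - 1) w) (fset_uniq G)) => Y YG /andP[].
  have [x [y [xy _ ->]]] := pairset_G YG; rewrite !mem_pairset => ? ?.
  by have [-> ->] : x = m - 1 /\ y = w by lia.
have P_top Y : Y \in enum_fset G -> count (P^~ Y) R = (m - 1 \in Y).
  move=> /pairset_G[x [y [xy y_le ->]]].
  rewrite (eq_in_count (a2 := fun w => (m - 1 \in pairset m x y) && (w == y))) => [|w].
    case: (m - 1 \in _) => /=; last exact: count_pred0.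
    by rewrite count_uniq_mem ?iota_uniq // mem_iota; lia.
  by rewrite mem_iota /P !mem_pairset => ?; lia.
have sum_P : \sum_(v <- R) 1 <= \sum_(v <- R) count (P v) (enum_fset G).
  rewrite sum_count_swap (eq_big_seq _ P_top) sum_nat_of_bool sum1_size size_iota.
  by rewrite count_G ?conj_part_lam56; lia.
by move=> v_range; apply: (eq_in_leq_sum P_le1 sum_P); rewrite mem_iota; lia.
Qed.

Lemma admissible_G X : X \in G -> exists x y, admissible56 m n x y /\ X = pairset m x y.
Proof.
move=> XG; have [x [y [xy y_le eX]]] := pairset_G XG; exists x, y; split => //.
rewrite /admissible56 xy /=; have [x_m1 | x_ne] := eqVneq x (m - 1); first lia.
have [|y_gt] := leqP y (m + 2); first lia.
have /hasP[Y YG /andP[m1_Y y_Y]] :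
    has (fun Y : {fset nat} => (m - 1 \in Y) && (y \in Y)) (enum_fset G).
  by rewrite has_count cover_m1_G //; lia.
have y_once : count (fun Z : {fset nat} => y \in Z) (enum_fset G) <= 1.
  by rewrite count_G ?conj_part_lam56; lia.
have y_X : y \in X by rewrite eX mem_pairset eqxx !orbT.
by move: m1_Y; rewrite -(count_le1_eq y_once XG YG y_X y_Y) eX mem_pairset; lia.
Qed.

Lemma family56_unique : G = family56 m n.
Proof.
have sub_G : (G `<=` family56 m n)%fset.
  by apply/fsubsetP => X /admissible_G /(in_family56 hm hn).
by apply/eqP; rewrite -(fsubset_leqif_cards sub_G).2 card_G card_family56.
Qed.

End Uniqueness.

Lemma nth_filter_pos {s : seq nat} {k} :
  (forall i, i <= k -> 0 < nth 0 s i) ->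
  forall i, i <= k -> nth 0 [seq p <- s | 0 < p] i = nth 0 s i.
Proof.
elim: s k => [|x s IHs] k s_pos i le_ik; first by rewrite nth_nil.
have /= x_pos := s_pos 0 isT; rewrite /= x_pos.
case: i le_ik => [//|i] le_ik; case: k s_pos le_ik => [//|k] s_pos le_ik.
by apply: (IHs k) => // j le_jk; apply: (s_pos j.+1).
Qed.

Lemma same_partition_nth {l1 l2 k} :
  same_partition l1 l2 ->
  (forall i, i <= k -> 0 < nth 0 l1 i) -> (forall i, i <= k -> 0 < nth 0 l2 i) ->
  forall i, i <= k -> nth 0 l1 i = nth 0 l2 i.
Proof.
move=> /eqP e pos1 pos2 i le_ik.
by rewrite -(nth_filter_pos pos1 i le_ik) e (nth_filter_pos pos2 i le_ik).
Qed.

Lemma nth_le_sumn (s : seq nat) i : nth 0 s i <= sumn s.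
Proof.
elim: s i => [|x s IHs] [|i] //=; first exact: leq_addr.
exact: leq_trans (IHs i) (leq_addl _ _).
Qed.

Lemma nth_star m n nu j : j < n -> (forall i, j.+1 + nth 0 nu i <= n) ->
  nth 0 (star m n nu) j = m + nth 0 nu j.
Proof.
move=> lt_jn nu_le; rewrite nth_mkseq // (eq_count (a2 := predT)) => [|i]; last exact: nu_le.
by rewrite count_predT size_iota.
Qed.

Lemma star_not_lam56 m n nu : 2 <= m -> 6 <= n -> is_partition_of (n - 1) nu ->
  ~~ same_partition (lam56 m n) (star m n nu).
Proof.
move=> hm hn /andP[_ /eqP sum_nu]; apply/negP => same.
have nu_le i : nth 0 nu i <= n - 1 by rewrite -sum_nu nth_le_sumn.
have nu_tail i : nth 0 nu 0 + nth 0 nu i.+1 <= n - 1.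
  by rewrite -sum_nu; case: (nu) => [|x s] /=; [lia | rewrite leq_add2l nth_le_sumn].
have nu_012 : nth 0 nu 0 + nth 0 nu 1 + nth 0 nu 2 <= n - 1.
  by rewrite -sum_nu; case: (nu) => [|x [|y [|z s]]] /=; lia.
have lam_pos i : i <= 2 -> 0 < nth 0 (lam56 m n) i by case: i => [|[|[|]]] //=; lia.
have row0 : nth 0 (star m n nu) 0 = m + nth 0 nu 0.
  by apply: nth_star => [|i]; [lia | have := nu_le i; lia].
have nu0 : nth 0 nu 0 = n - 4.
  have e0 : nth 0 (lam56 m n) 0 = nth 0 (star m n nu) 0.
    by apply: (same_partition_nth (k := 0) same) => // -[] // _; rewrite ?row0 //=; lia.
  by move: e0; rewrite row0 /=; lia.
have rows j : j <= 2 -> nth 0 (star m n nu) j = m + nth 0 nu j.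
  by move=> le_j2; apply: nth_star => [|[|i]]; [lia | lia | have := nu_tail i; lia].
have lam_nu j : j <= 2 -> nth 0 (lam56 m n) j = m + nth 0 nu j.
  move=> le_j2; rewrite -rows //; apply: (same_partition_nth (k := j) same) => // i le_ij.
    by apply: lam_pos; lia.
  by rewrite rows; lia.
by have := lam_nu 1 isT; have := lam_nu 2 isT; rewrite /=; lia.
Qed.

Local Open Scope fset_scope.

Theorem lemma5p6 (m n : nat) (hn : 6 <= n) (hm : 2 <= m) :
  (exists F : {fset {fset nat}},
     [/\ shape_family m n F, has_type (lam56 m n) F,
         (forall X : {fset nat},
            X \in F <-> (in_downset m (A56 m) X \/ in_downset m (B56 m n) X)) &
         (forall G : {fset {fset nat}},
            shape_family m n G -> has_type (lam56 m n) G -> G = F)])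
  /\
  (forall nu : seq nat, is_partition_of (n - 1) nu -> size nu <= m ->
     ~~ same_partition (lam56 m n) (star m n nu)).
Proof.
split; last by move=> nu nu_part _; apply: star_not_lam56.
exists (family56 m n); split.
- exact: shape_family56.
- exact: type_family56.
- exact: downsets_family56.
- by move=> G shapeG typeG; apply: family56_unique.
Qed.
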